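(* Let $p>1$ and let $\mathbf f^*$ be the optimal solution to the minimum weighted $p$-norm flow problem. Then $\mathcal E(\mathbf f^* )\le\frac1pn\|\mathbf r\|_\infty\|\mathbf b\|_1^p$. In addition, for all $(i,j)\in\vec E$, $|f^*(i,j)|\le(nR)^{\frac1p}\|\mathbf b\|_1$, which implies that $|x^*(i)-x^*(j)|\le r(i,j)(nR)^{\frac{p-1}p}\|\mathbf b\|_1^{p-1}$ for all $(i,j)\in\vec E$.
   Context: $G=(V,E)$ is a connected undirected graph with $n$ vertices, weights $r(e)>0$, $R=\max_er(e)/\min_er(e)$, $\|\mathbf r\|_\infty=\max_er(e)$, and fixed orientation $\vec E$ (with $f(j,i)=-f(i,j)$). $\mathbf b\in\mathbb R^V$ with $\sum_ib(i)=0$; a $\mathbf b$-flow has net outflow $b(i)$ at every vertex $i$. $\mathcal E(\mathbf f)=\frac1p\sum_{e\in\vec E}r(e)|f(e)|^p$ and $\mathbf f^*$ minimizes it over $\mathbf b$-flows. $\mathbf x^*$ is an optimal solution of the dual problem $\max_{\mathbf x}\ \mathbf b^\top\mathbf x-(1-\frac1p)\sum_{(i,j)\in\vec E}\big(|x(i)-x(j)|^p/r(i,j)\big)^{\frac1{p-1}}$; optimal $\mathbf f^*,\mathbf x^*$ satisfy $r(i,j)f^*(i,j)|f^*(i,j)|^{p-2}=x^*(i)-x^*(j)$ for all $(i,j)\in\vec E$. *)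

From HB Require Import structures.
From mathcomp Require Import all_boot all_order all_algebra.
From mathcomp Require Import reals exp.
Set Implicit Arguments. Unset Strict Implicit. Unset Printing Implicit Defensive.
Import Order.TTheory GRing.Theory Num.Theory.
Local Open Scope ring_scope.

(* An undirected graph G = (V,E) with a fixed orientation: every (undirected)
   edge e : E is oriented from [src e] to [dst e]. *)
Section Graph.
Variables (V E : finType) (src dst : E -> V).

Definition simple_oriented_graph : Prop :=
  (forall e, src e != dst e) /\
  (forall e1 e2,
     ((src e1 == src e2) && (dst e1 == dst e2)) ||
     ((src e1 == dst e2) && (dst e1 == src e2)) -> e1 = e2).

Definition adj : rel V := fun u v =>
  [exists e, ((src e == u) && (dst e == v)) || ((src e == v) && (dst e == u))].

Definition connected_graph : Prop := forall u v : V, connect adj u v.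

Variable R : realType.

Definition is_bflow (b : V -> R) (f : E -> R) : Prop :=
  forall i : V,
    \sum_(e | src e == i) f e - \sum_(e | dst e == i) f e = b i.

Definition energy (p : R) (r : E -> R) (f : E -> R) : R :=
  p^-1 * \sum_e r e * (`|f e| `^ p).

Definition optimal_flow (p : R) (r : E -> R) (b : V -> R) (f : E -> R) : Prop :=
  is_bflow b f /\ forall g, is_bflow b g -> energy p r f <= energy p r g.

Definition dual_obj (p : R) (r : E -> R) (b : V -> R) (x : V -> R) : R :=
  \sum_i b i * x i
  - (1 - p^-1) * \sum_e ((`|x (src e) - x (dst e)| `^ p / r e) `^ (p - 1)^-1).

Definition optimal_dual (p : R) (r : E -> R) (b : V -> R) (x : V -> R) : Prop :=
  forall y : V -> R, dual_obj p r b y <= dual_obj p r b x.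

Definition rmax (r : E -> R) : R := \big[Num.max/0]_e r e.
Definition rmin (r : E -> R) : R := \big[Num.min/rmax r]_e r e.
Definition rratio (r : E -> R) : R := rmax r / rmin r.
Definition norm1 (b : V -> R) : R := \sum_i `|b i|.

End Graph.

From HB Require Import structures.
From mathcomp Require Import all_boot all_order all_algebra.
From mathcomp Require Import reals exp.
From mathcomp Require Import ring.
Set Implicit Arguments. Unset Strict Implicit. Unset Printing Implicit Defensive.
Import Order.TTheory GRing.Theory Num.Theory.
Local Open Scope ring_scope.

(* Route every demand b(i) along a simple path to a fixed sink.  The resulting
   b-flow g carries at most ||b||_1 on every edge and has total volume
   sum_e |g e| <= n ||b||_1, so its energy is at most 1/p n ||r||_oo ||b||_1^p;
   by optimality so is the energy of f*.  A single edge e contributes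
   r(e) |f*(e)|^p / p to that energy, and r(e) >= min r gives the per-edge bound,
   which the optimality condition r |f*|^(p-2) f* = x*(i) - x*(j) transfers to
   the potentials. *)

Lemma size_uniq_le_card (T : finType) (s : seq T) : uniq s -> (size s <= #|T|)%N.
Proof. by move=> /card_uniqP <-; apply: max_card. Qed.

Section Routing.
Variables (R : realType) (V E : finType) (src dst : E -> V).

Definition divergence (h : E -> R) (i : V) : R :=
  \sum_e h e * ((src e == i)%:R - (dst e == i)%:R).

Lemma is_bflow_divergence (b : V -> R) h :
  (forall i, divergence h i = b i) -> is_bflow src dst b h.
Proof.
move=> hb i; rewrite -hb /divergence.
under [RHS]eq_bigr do rewrite mulrBr.
rewrite sumrB; congr (_ - _); rewrite big_mkcond /=; apply: eq_bigr => e _.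
  by case: eqP; rewrite ?mulr1 ?mulr0.
by case: eqP; rewrite ?mulr1 ?mulr0.
Qed.

Lemma divergenceD h1 h2 i :
  divergence (fun e => h1 e + h2 e) i = divergence h1 i + divergence h2 i.
Proof. by rewrite /divergence -big_split; apply: eq_bigr => e _; rewrite mulrDl. Qed.

Lemma divergence0 i : divergence (fun=> 0) i = 0.
Proof. by rewrite /divergence big1 // => e _; rewrite mul0r. Qed.

Lemma divergence_sum (I : finType) (c : I -> R) (h : I -> E -> R) j :
  divergence (fun e => \sum_k c k * h k e) j = \sum_k c k * divergence (h k) j.
Proof.
rewrite /divergence; under eq_bigr do rewrite mulr_suml.
rewrite exchange_big; apply: eq_bigr => k _; rewrite mulr_sumr.
by apply: eq_bigr => e _; rewrite mulrA.
Qed.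

Definition joins (u v : V) (e : E) : bool :=
  ((src e == u) && (dst e == v)) || ((src e == v) && (dst e == u)).

Definition edge_flow (u v : V) (e : E) : R :=
  if [pick e' | joins u v e'] == Some e then (if src e == u then 1 else -1) else 0.

Lemma edge_flow_neq0 u v e : edge_flow u v e != 0 -> joins u v e.
Proof.
rewrite /edge_flow; case: pickP => [e' He' | _]; last by rewrite eqxx.
by have [[<-] _ | _] := eqVneq (Some e') (Some e); last rewrite eqxx.
Qed.

Lemma norm_edge_flow_le1 u v e : `|edge_flow u v e| <= 1.
Proof.
rewrite /edge_flow; case: ifP => _; last by rewrite normr0.
by case: ifP => _; rewrite ?normrN normr1.
Qed.

Lemma sum_norm_edge_flow u v : \sum_e `|edge_flow u v e| <= 1.
Proof.
rewrite /edge_flow; case: pickP => [e0 _ | _]; last first.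
  by rewrite big1 // => e _; rewrite normr0.
rewrite (bigD1 e0) //= big1 => [|e ne]; last first.
  by rewrite -[Some e0 == _]/(e0 == e) eq_sym (negbTE ne) normr0.
by rewrite eqxx addr0; case: ifP => _; rewrite ?normrN normr1.
Qed.

Lemma divergence_edge_flow u v i : adj src dst u v ->
  divergence (edge_flow u v) i = (i == u)%:R - (i == v)%:R.
Proof.
move=> /existsP[e1 He1]; rewrite /divergence /edge_flow.
case: pickP => [e0 He0 | /(_ e1)]; last by rewrite /= /joins He1.
rewrite (bigD1 e0) //= big1 => [|e ne]; last first.
  by rewrite -[Some e0 == _]/(e0 == e) eq_sym (negbTE ne) mul0r.
rewrite eqxx addr0; case/orP: He0 => /andP[/eqP-> /eqP->].
  by rewrite eqxx mul1r !(eq_sym i).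
have [-> | _] := eqVneq v u; first by rewrite !subrr mulr0.
by rewrite mulN1r opprB !(eq_sym i).
Qed.

Fixpoint path_flow (u : V) (s : seq V) (e : E) : R :=
  if s is v :: s' then edge_flow u v e + path_flow v s' e else 0.

Lemma divergence_path_flow u s i : path (adj src dst) u s ->
  divergence (path_flow u s) i = (i == u)%:R - (i == last u s)%:R.
Proof.
elim: s u => [|v s IH] u /=; first by rewrite divergence0 subrr.
case/andP=> uv vs; rewrite divergenceD divergence_edge_flow // IH //.
by rewrite addrA subrK.
Qed.

Lemma path_flow_neq0 u s e :
  path_flow u s e != 0 -> (src e \in u :: s) && (dst e \in u :: s).
Proof.
elim: s u => [|v s IH] u /=; first by rewrite eqxx.
have [-> | /edge_flow_neq0 uve] := eqVneq (edge_flow u v e) 0.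
  rewrite add0r => /IH /andP[hs hd].
  by rewrite [src e \in _]in_cons [dst e \in _]in_cons hs hd !orbT.
by move=> _; case/orP: uve => /andP[/eqP-> /eqP->]; rewrite !inE !eqxx !orbT.
Qed.

Lemma sum_norm_path_flow u s : \sum_e `|path_flow u s e| <= (size s)%:R.
Proof.
elim: s u => [|v s IH] u /=; first by rewrite big1 // => e _; rewrite normr0.
apply: le_trans (_ : \sum_e (`|edge_flow u v e| + `|path_flow v s e|) <= _).
  by apply: ler_sum => e _; apply: ler_normD.
by rewrite big_split /= mulrS lerD ?sum_norm_edge_flow.
Qed.

Lemma norm_path_flow_le1 u s e : uniq (u :: s) -> `|path_flow u s e| <= 1.
Proof.
elim: s u => [|v s IH] u; first by rewrite normr0.
rewrite cons_uniq => /andP[us vs] /=.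
have [-> | /edge_flow_neq0 uve] := eqVneq (edge_flow u v e) 0.
  by rewrite add0r IH.
have -> : path_flow v s e = 0.
  apply/eqP; apply: contraNT us => /path_flow_neq0 /andP[hs hd].
  by case/orP: uve => /andP[/eqP su /eqP du]; [rewrite -su | rewrite -du].
by rewrite addr0 norm_edge_flow_le1.
Qed.

Lemma exists_bflow_small (b : V -> R) :
  connected_graph src dst -> \sum_i b i = 0 ->
  exists g, [/\ is_bflow src dst b g, forall e, `|g e| <= norm1 b &
                \sum_e `|g e| <= #|V|%:R * norm1 b].
Proof.
move=> hconn hb; have b0 : 0 <= norm1 b by apply: sumr_ge0 => i _.
case: (pickP (@predT V)) => [v0 _ | V0]; last first.
  exists (fun=> 0); split=> [i | e |]; first by have := V0 i.
    by rewrite normr0.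
  by rewrite big1 ?mulr_ge0 // => e _; rewrite normr0.
have path_to i :
    exists s, [&& path (adj src dst) i s, uniq (i :: s) & last i s == v0].
  have /connectP[s ps ->] := hconn i v0.
  by case: (shortenP ps) => s' ps' us' _; exists s'; rewrite ps' us' eqxx.
pose ps i := xchoose (path_to i).
have [path_ps uniq_ps last_ps] : [/\ forall i, path (adj src dst) i (ps i),
    forall i, uniq (i :: ps i) & forall i, last i (ps i) = v0].
  by split=> i; case/and3P: (xchooseP (path_to i)) => // _ _ /eqP.
exists (fun e => \sum_i b i * path_flow i (ps i) e); split.
- apply: is_bflow_divergence => j; rewrite divergence_sum.
  rewrite (eq_bigr (fun i => b i * (j == i)%:R - b i * (j == v0)%:R)); last first.
    by move=> i _; rewrite divergence_path_flow // last_ps mulrBr.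
  rewrite sumrB -mulr_suml hb mul0r subr0 (bigD1 j) //= eqxx mulr1 big1 ?addr0 //.
  by move=> i; rewrite eq_sym => /negbTE ->; rewrite mulr0.
- move=> e; apply: le_trans (ler_norm_sum _ _ _) _; apply: ler_sum => i _.
  by rewrite normrM ler_piMr ?norm_path_flow_le1.
- apply: le_trans (_ : \sum_e \sum_i `|b i| * `|path_flow i (ps i) e| <= _).
    apply: ler_sum => e _; apply: le_trans (ler_norm_sum _ _ _) _.
    by apply: ler_sum => i _; rewrite normrM.
  rewrite exchange_big /= /norm1 mulr_sumr; apply: ler_sum => i _.
  rewrite -mulr_sumr mulrC ler_wpM2r //; apply: le_trans (sum_norm_path_flow _ _) _.
  by rewrite ler_nat ltnW // (size_uniq_le_card (uniq_ps i)).
Qed.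

End Routing.

Section Powers.
Variable R : realType.
Implicit Types x y B a p : R.

Lemma powRK x p : 0 <= x -> p != 0 -> (x `^ p) `^ p^-1 = x.
Proof. by move=> x0 p0; rewrite -powRrM divff // powRr1. Qed.

Lemma powR_le_root x y p : 0 < p -> 0 <= x -> 0 <= y ->
  x `^ p <= y -> x <= y `^ p^-1.
Proof.
move=> p0 x0 y0 xy; rewrite -[x in x <= _](powRK x0 (lt0r_neq0 p0)).
by apply: ge0_ler_powR; rewrite // ?nnegrE ?powR_ge0 // invr_ge0 ltW.
Qed.

Lemma powR_le_mul_powRB1 x B p : 1 <= p -> 0 <= x -> x <= B ->
  x `^ p <= x * B `^ (p - 1).
Proof.
move=> p1 x0 xB; rewrite -mulr_powRB1 ?(lt_le_trans ltr01 p1) // ler_wpM2l //.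
by apply: ge0_ler_powR; rewrite ?subr_ge0 // nnegrE (le_trans x0 xB).
Qed.

Lemma normr_mul_powRB2 a p : p != 1 -> `|a * `|a| `^ (p - 2)| = `|a| `^ (p - 1).
Proof.
move=> p1; have [-> | a0] := eqVneq a 0.
  by rewrite mul0r normr0 powR0 // subr_eq0.
rewrite normrM (ger0_norm (powR_ge0 _ _)) -{1}(powRr1 (normr_ge0 a)) -powRD.
  by congr (_ `^ _); ring.
by rewrite normr_eq0 a0 implybT.
Qed.

Lemma normr_scaled_powRB2_le c a K p : 1 < p -> 0 <= c -> `|a| <= K ->
  `|c * a * `|a| `^ (p - 2)| <= c * K `^ (p - 1).
Proof.
move=> p1 c0 aK; rewrite -mulrA normrM normr_mul_powRB2 ?gt_eqF // ger0_norm //.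
rewrite ler_wpM2l //; apply: ge0_ler_powR => //.
- by rewrite subr_ge0 ltW.
- by rewrite nnegrE (le_trans _ aK).
Qed.

End Powers.

Section Energy.
Variables (R : realType) (E : finType).
Implicit Types (r f g : E -> R) (p : R).

Lemma rmax_ge r e : r e <= rmax r.
Proof. exact: le_bigmax. Qed.

Lemma rmax_ge0 r : 0 <= rmax r.
Proof. exact: bigmax_ge_id. Qed.

Lemma rmin_le r e : rmin r <= r e.
Proof. exact: bigmin_le. Qed.

Lemma rmin_ge0 r : (forall e, 0 <= r e) -> 0 <= rmin r.
Proof. by move=> hr; apply: le_bigmin => [|e _]; [apply: rmax_ge0 | apply: hr]. Qed.

Lemma rratio_ge0 r : (forall e, 0 <= r e) -> 0 <= rratio r.
Proof. by move=> hr; rewrite divr_ge0 ?rmax_ge0 ?rmin_ge0. Qed.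

Lemma rmin_gt0 r (e0 : E) : (forall e, 0 < r e) -> 0 < rmin r.
Proof.
by move=> hr; apply: lt_bigmin => [|e _]; [apply: lt_le_trans (rmax_ge r e0) |].
Qed.

Lemma energy_le (p M N B : R) r g : 1 <= p -> 0 <= M -> 0 <= B ->
  (forall e, 0 <= r e <= M) -> (forall e, `|g e| <= B) -> \sum_e `|g e| <= N * B ->
  energy p r g <= p^-1 * N * M * B `^ p.
Proof.
move=> p1 M0 B0 rM gB gN; have p0 : 0 < p := lt_le_trans ltr01 p1.
rewrite /energy -!mulrA ler_pM2l ?invr_gt0 //.
apply: le_trans (_ : \sum_e M * (`|g e| * B `^ (p - 1)) <= _).
  apply: ler_sum => e _; have /andP[r0 reM] := rM e.
  by apply: ler_pM; rewrite ?powR_ge0 ?powR_le_mul_powRB1.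
rewrite -mulr_sumr -mulr_suml -(mulr_powRB1 B0 p0).
have -> : N * (M * (B * B `^ (p - 1))) = M * ((N * B) * B `^ (p - 1)) by ring.
by rewrite ler_wpM2l // ler_wpM2r ?powR_ge0.
Qed.

Lemma energy_edge_le p r f e : 0 < p -> (forall e, 0 <= r e) ->
  r e * `|f e| `^ p <= p * energy p r f.
Proof.
move=> p0 hr; rewrite /energy mulrA divff ?gt_eqF // mul1r (bigD1 e) //= lerDl.
by apply: sumr_ge0 => e' _; rewrite mulr_ge0 ?powR_ge0.
Qed.

Lemma norm_le_of_energy_le (p C : R) r f e : 0 < p -> (forall e, 0 < r e) ->
  energy p r f <= p^-1 * C -> `|f e| <= (C / rmin r) `^ p^-1.
Proof.
move=> p0 hr hE; have m0 := rmin_gt0 e hr.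
have fC : r e * `|f e| `^ p <= C.
  apply: le_trans (energy_edge_le f e p0 (fun e => ltW (hr e))) _.
  by rewrite -[C](mulVKf (lt0r_neq0 p0)) ler_pM2l.
have C0 : 0 <= C by apply: le_trans fC; rewrite mulr_ge0 ?powR_ge0 ?ltW.
apply: powR_le_root => //; first by rewrite divr_ge0 // ltW.
rewrite ler_pdivlMr //.
by apply: le_trans fC; rewrite mulrC ler_wpM2r ?powR_ge0 ?rmin_le.
Qed.

End Energy.

Theorem mainTheorem18 (R : realType) (V E : finType) (src dst : E -> V)
  (r : E -> R) (b : V -> R) (p : R) (fstar : E -> R) (xstar : V -> R) :
  simple_oriented_graph src dst ->
  connected_graph src dst ->
  (forall e, 0 < r e) ->
  \sum_i b i = 0 ->
  1 < p ->
  optimal_flow src dst p r b fstar ->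
  optimal_dual src dst p r b xstar ->
  (forall e, r e * fstar e * (`|fstar e| `^ (p - 2)) = xstar (src e) - xstar (dst e)) ->
  [/\ energy p r fstar <= p^-1 * #|V|%:R * rmax r * (norm1 b `^ p),
      (forall e, `|fstar e| <= (#|V|%:R * rratio r) `^ p^-1 * norm1 b) &
      (forall e, `|xstar (src e) - xstar (dst e)|
                 <= r e * (#|V|%:R * rratio r) `^ ((p - 1) / p) * (norm1 b `^ (p - 1)))].
Proof.
move=> _ hconn hr hb p1 [fb fopt] _ hx.
have p0 : 0 < p := lt_trans ltr01 p1.
set n : R := #|V|%:R; set B := norm1 b.
have B0 : 0 <= B by apply: sumr_ge0 => i _.
have nR0 : 0 <= n * rratio r by rewrite mulr_ge0 ?rratio_ge0 // => e; apply: ltW.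
have hE : energy p r fstar <= p^-1 * n * rmax r * B `^ p.
  have [g [gb gB gN]] := exists_bflow_small hconn hb.
  apply: le_trans (fopt g gb) (energy_le (ltW p1) (rmax_ge0 r) B0 _ gB gN).
  by move=> e; rewrite ltW ?rmax_ge.
have hf e : `|fstar e| <= (n * rratio r) `^ p^-1 * B.
  rewrite -[B in _ * B](powRK B0 (lt0r_neq0 p0)) -powRM ?powR_ge0 //.
  have -> : n * rratio r * B `^ p = n * (rmax r * B `^ p) / rmin r.
    by rewrite /rratio !mulrA mulrAC.
  by apply: norm_le_of_energy_le; rewrite // -!mulrA in hE *.
split => // e; rewrite -hx.
apply: le_trans (normr_scaled_powRB2_le p1 (ltW (hr e)) (hf e)) _.
by rewrite powRM ?powR_ge0 // -powRrM [p^-1 * _]mulrC mulrA.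
Qed.
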